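(* Let $f,g$ be real analytic functions on $[-1,1]$ and consider the Abel equation $$x'(t)=f(t)x^3+g(t)x^2,\qquad t\in[-1,1].$$ If this equation has a center at $x=0$, then $$m_k=\int_{-1}^1 f(t)\,(G(t))^k\,dt=0,\qquad k=0,1,2,$$ where $G(t)=\int_{-1}^t g(s)\,ds$.
   Context: The Abel equation $x'=f(t)x^3+g(t)x^2$ on $[-1,1]$ (with $x$ real) is said to have a center at $x=0$ if every solution $x(t)$ whose initial value $x(-1)$ is small enough in absolute value is defined on $[-1,1]$ and satisfies $x(-1)=x(1)$. *)

From Stdlib Require Import Reals.
From Coquelicot Require Import Coquelicot.
Open Scope R_scope.

Definition real_analytic_on_I (f : R -> R) : Prop :=
  forall t0, -1 <= t0 <= 1 ->
    exists (a : nat -> R) (r : R), 0 < r /\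
      forall t, Rabs (t - t0) < r -> is_pseries a (t - t0) (f t).

Definition abel_solution (f g x : R -> R) : Prop :=
  forall t, -1 <= t <= 1 -> is_derive x t (f t * (x t) ^ 3 + g t * (x t) ^ 2).

Definition abel_center (f g : R -> R) : Prop :=
  exists delta, 0 < delta /\
    forall x0, Rabs x0 < delta ->
      (exists x, abel_solution f g x /\ x (-1) = x0) /\
      (forall x, abel_solution f g x -> x (-1) = x0 -> x 1 = x0).

From Stdlib Require Import Reals Lra Lia Classical.
From Coquelicot Require Import Coquelicot.
Open Scope R_scope.

(* Only the continuity of f and g matters.  For large c take the solution x with
   x(-1) = 1/c.  Since (1/x)' = -(g + f x), it stays in the band |1/x - c| <= 4M and
   1/x = c - A with A = G + E, E(t) = int_{-1}^t f x = O(1/c); the return x(1) = 1/c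
   means A(1) = 0, hence G(1) = O(1/c).  Expanding x = 1/(c - A) in powers of 1/c in
   0 = c^(k+1) E(1) = int c^(k+1) f x expresses m_k as O(1/c) once m_0, ..., m_(k-1)
   vanish.  Letting c go to infinity gives G(1) = m_0 = m_1 = m_2 = 0. *)

Definition everywhere_continuous (h : R -> R) : Prop := forall t, continuous h t.

Definition primitive (u : R -> R) (t : R) : R := RInt u (-1) t.

Definition moment (f G : R -> R) (k : nat) : R := RInt (fun t => f t * G t ^ k) (-1) 1.

Lemma Rabs_mult_le (x y A B : R) : Rabs x <= A -> Rabs y <= B -> Rabs (x * y) <= A * B.
Proof. intros Hx Hy. rewrite Rabs_mult. apply Rmult_le_compat; auto using Rabs_pos. Qed.

Lemma Rabs_plus_le (x y A B : R) : Rabs x <= A -> Rabs y <= B -> Rabs (x + y) <= A + B.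
Proof. intros Hx Hy. eapply Rle_trans; [apply Rabs_triang | lra]. Qed.

Lemma Rabs_minus_le (x y A B : R) : Rabs x <= A -> Rabs y <= B -> Rabs (x - y) <= A + B.
Proof.
  intros Hx Hy. unfold Rminus. apply Rabs_plus_le; [exact Hx|]. rewrite Rabs_Ropp. exact Hy.
Qed.

Lemma everywhere_continuous_const (k : R) : everywhere_continuous (fun _ => k).
Proof. intros t. apply continuous_const. Qed.

Lemma everywhere_continuous_plus (u v : R -> R) :
  everywhere_continuous u -> everywhere_continuous v ->
  everywhere_continuous (fun t => u t + v t).
Proof. intros Hu Hv t. exact (continuous_plus u v t (Hu t) (Hv t)). Qed.

Lemma everywhere_continuous_minus (u v : R -> R) :
  everywhere_continuous u -> everywhere_continuous v ->
  everywhere_continuous (fun t => u t - v t).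
Proof. intros Hu Hv t. exact (continuous_minus u v t (Hu t) (Hv t)). Qed.

Lemma everywhere_continuous_mult (u v : R -> R) :
  everywhere_continuous u -> everywhere_continuous v ->
  everywhere_continuous (fun t => u t * v t).
Proof. intros Hu Hv t. exact (continuous_mult u v t (Hu t) (Hv t)). Qed.

Lemma everywhere_continuous_pow (u : R -> R) (n : nat) :
  everywhere_continuous u -> everywhere_continuous (fun t => u t ^ n).
Proof.
  intros Hu. induction n as [|n IH]; simpl.
  - apply everywhere_continuous_const.
  - exact (everywhere_continuous_mult u _ Hu IH).
Qed.

Lemma ex_RInt_everywhere_continuous (u : R -> R) (a b : R) :
  everywhere_continuous u -> ex_RInt u a b.
Proof.
  intros Hu. apply (ex_RInt_continuous (V := R_CompleteNormedModule)).
  intros z _. apply Hu.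
Qed.

Lemma is_derive_primitive (u : R -> R) (t : R) :
  everywhere_continuous u -> is_derive (primitive u) t (u t).
Proof.
  intros Hu. apply (is_derive_RInt (V := R_CompleteNormedModule) _ _ (-1)).
  - exists (mkposreal 1 Rlt_0_1). intros y _.
    apply RInt_correct, ex_RInt_everywhere_continuous, Hu.
  - apply Hu.
Qed.

Lemma everywhere_continuous_primitive (u : R -> R) :
  everywhere_continuous u -> everywhere_continuous (primitive u).
Proof.
  intros Hu t. apply (ex_derive_continuous (V := R_NormedModule)).
  eexists. apply is_derive_primitive, Hu.
Qed.

Create HintDb continuity.
#[export] Hint Resolve everywhere_continuous_const everywhere_continuous_plus
  everywhere_continuous_minus everywhere_continuous_mult everywhere_continuous_pow
  everywhere_continuous_primitive ex_RInt_everywhere_continuous : continuity.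

Lemma RInt_plus_R (u v : R -> R) (a b : R) : ex_RInt u a b -> ex_RInt v a b ->
  RInt (fun t => u t + v t) a b = RInt u a b + RInt v a b.
Proof. exact (RInt_plus u v a b). Qed.

Lemma RInt_minus_R (u v : R -> R) (a b : R) : ex_RInt u a b -> ex_RInt v a b ->
  RInt (fun t => u t - v t) a b = RInt u a b - RInt v a b.
Proof. exact (RInt_minus u v a b). Qed.

Lemma RInt_scal_R (u : R -> R) (k a b : R) : ex_RInt u a b ->
  RInt (fun t => k * u t) a b = k * RInt u a b.
Proof. intros Hu. exact (RInt_scal u a b k Hu). Qed.

Lemma RInt_ext_I (u v : R -> R) : (forall t, -1 <= t <= 1 -> u t = v t) ->
  RInt u (-1) 1 = RInt v (-1) 1.
Proof.
  intros Huv. apply RInt_ext. intros t Ht.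
  rewrite Rmin_left, Rmax_right in Ht by lra. apply Huv. lra.
Qed.

Lemma primitive_congr (u v : R -> R) (t : R) : -1 <= t ->
  (forall s, -1 <= s <= t -> u s = v s) -> primitive u t = primitive v t.
Proof.
  intros Ht Huv. apply RInt_ext. intros s Hs.
  rewrite Rmin_left, Rmax_right in Hs by lra. apply Huv. lra.
Qed.

Lemma primitive_start (u : R -> R) : primitive u (-1) = 0.
Proof. exact (RInt_point (V := R_CompleteNormedModule) (-1) u). Qed.

Lemma RInt_primitive_mul_self (u : R -> R) (b : R) : everywhere_continuous u ->
  RInt (fun t => primitive u t * u t) (-1) b = primitive u b ^ 2 / 2.
Proof.
  intros Hu. apply is_RInt_unique.
  replace (primitive u b ^ 2 / 2)
    with (minus (/ 2 * (primitive u b * primitive u b))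
                (/ 2 * (primitive u (-1) * primitive u (-1)))).
  2: { rewrite primitive_start. unfold minus, plus, opp; simpl. field. }
  apply (is_RInt_derive (V := R_CompleteNormedModule)
           (fun t => / 2 * (primitive u t * primitive u t))).
  - intros t _.
    replace (primitive u t * u t)
      with (/ 2 * plus (mult (u t) (primitive u t)) (mult (primitive u t) (u t)))
      by (unfold plus, mult; simpl; field).
    apply is_derive_scal, (is_derive_mult (K := R_AbsRing));
      [apply is_derive_primitive, Hu .. | intros; apply Rmult_comm].
  - intros t _. apply everywhere_continuous_mult; auto with continuity.
Qed.

Lemma continuous_R_eps (h : R -> R) (t : R) :
  continuous h t <->
  forall eps, 0 < eps ->
    exists d, 0 < d /\ forall s, Rabs (s - t) < d -> Rabs (h s - h t) < eps.
Proof.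
  unfold continuous. rewrite <- continuity_pt_filterlim, continuity_pt_locally. split.
  - intros Hc eps Heps. destruct (Hc (mkposreal eps Heps)) as [d Hd].
    exists d. split; [apply cond_pos | exact Hd].
  - intros Hc eps. destruct (Hc eps (cond_pos eps)) as [d [Hd Hnear]].
    exists (mkposreal d Hd). exact Hnear.
Qed.

Lemma continuous_le_left (h : R -> R) (a t B : R) : continuous h t -> a < t ->
  (forall s, a <= s < t -> h s <= B) -> h t <= B.
Proof.
  intros Hc Hat Hle. apply Rnot_lt_le. intros HB.
  destruct (proj1 (continuous_R_eps h t) Hc (h t - B)) as [d [Hd Hnear]]; [lra|].
  set (s := Rmax a (t - d / 2)).
  assert (Hs : a <= s < t) by (unfold s, Rmax; destruct Rle_dec; lra).
  assert (Hst : Rabs (s - t) < d) by (apply Rabs_def1; unfold s, Rmax; destruct Rle_dec; lra).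
  specialize (Hnear s Hst). specialize (Hle s Hs). apply Rabs_def2 in Hnear. lra.
Qed.

Lemma continuous_strict_bounds_near (h : R -> R) (t lo hi : R) :
  continuous h t -> lo < h t < hi ->
  exists d, 0 < d /\ forall s, Rabs (s - t) < d -> lo < h s < hi.
Proof.
  intros Hc Hb.
  destruct (proj1 (continuous_R_eps h t) Hc (Rmin (h t - lo) (hi - h t)))
    as [d [Hd Hnear]]; [apply Rmin_pos; lra|].
  exists d. split; [exact Hd|]. intros s Hs.
  specialize (Hnear s Hs). apply Rabs_def2 in Hnear.
  pose proof (Rmin_l (h t - lo) (hi - h t)). pose proof (Rmin_r (h t - lo) (hi - h t)).
  lra.
Qed.

Lemma continuous_induction (P : R -> Prop) (a b : R) : a <= b ->
  (forall t, a <= t <= b -> (forall s, a <= s < t -> P s) ->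
     exists d, 0 < d /\ forall s, a <= s < t + d -> P s) ->
  forall t, a <= t <= b -> P t.
Proof.
  intros Hab Hstep.
  set (S := fun t => a <= t <= b /\ forall s, a <= s < t -> P s).
  assert (HSb : bound S) by (exists b; intros t [Ht _]; lra).
  assert (HSa : S a) by (split; [lra | intros s Hs; lra]).
  destruct (completeness S HSb (ex_intro _ a HSa)) as [T [HTub HTlub]].
  assert (HaT : a <= T) by (apply HTub, HSa).
  assert (HTb : T <= b) by (apply HTlub; intros t [Ht _]; lra).
  assert (HbelowT : forall s, a <= s < T -> P s).
  { intros s Hs. apply NNPP. intros HnP.
    assert (T <= s); [|lra]. apply HTlub. intros t [_ Ht].
    apply Rnot_lt_le. intros Hst. apply HnP, Ht. lra. }
  destruct (Hstep T (conj HaT HTb) HbelowT) as [d [Hd Hnear]].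
  assert (HTe : T = b).
  { apply Rle_antisym; [exact HTb|]. apply Rnot_lt_le. intros HTlt.
    set (t' := Rmin b (T + d / 2)).
    assert (t' <= T); [|unfold t', Rmin in *; destruct Rle_dec; lra].
    apply HTub. split.
    - unfold t', Rmin; destruct Rle_dec; lra.
    - intros s Hs. apply Hnear. unfold t', Rmin in Hs; destruct Rle_dec in Hs; lra. }
  intros t Ht. apply Hnear. lra.
Qed.

Definition clamp (t : R) : R := Rmax (-1) (Rmin 1 t).

Definition extend (h : R -> R) (t : R) : R := h (clamp t).

Lemma clamp_in (t : R) : -1 <= clamp t <= 1.
Proof. unfold clamp, Rmax, Rmin. repeat destruct Rle_dec; lra. Qed.

Lemma clamp_id (t : R) : -1 <= t <= 1 -> clamp t = t.
Proof. intros Ht. unfold clamp, Rmax, Rmin. repeat destruct Rle_dec; lra. Qed.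

Lemma clamp_continuous (t : R) : continuous clamp t.
Proof.
  apply continuous_R_eps. intros eps Heps. exists eps. split; [exact Heps|].
  intros s Hs. eapply Rle_lt_trans; [|exact Hs].
  unfold clamp, Rmax, Rmin. repeat destruct Rle_dec; unfold Rabs; repeat destruct Rcase_abs; lra.
Qed.

Lemma extend_id (h : R -> R) (t : R) : -1 <= t <= 1 -> extend h t = h t.
Proof. intros Ht. unfold extend. rewrite clamp_id; auto. Qed.

Lemma extend_everywhere_continuous (h : R -> R) :
  (forall t, -1 <= t <= 1 -> continuous h t) -> everywhere_continuous (extend h).
Proof.
  intros Hh t. apply (continuous_comp clamp h t (clamp_continuous t)).
  apply Hh, clamp_in.
Qed.

Lemma real_analytic_on_I_continuous (f : R -> R) : real_analytic_on_I f ->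
  forall t0, -1 <= t0 <= 1 -> continuous f t0.
Proof.
  intros Hf t0 Ht0. destruct (Hf t0 Ht0) as [a [r [Hr Ha]]].
  assert (Hrad : Rbar_lt 0 (CV_radius a)).
  { destruct (Rbar_lt_le_dec (CV_radius a) (r / 2)) as [Hlt|Hle].
    - exfalso. apply (CV_disk_outside a (r / 2)).
      + rewrite Rabs_pos_eq; [exact Hlt | lra].
      + assert (Hser : ex_series (fun k => scal (pow_n (r / 2) k) (a k))).
        { exists (f (t0 + r / 2)).
          assert (Hpt : Rabs (t0 + r / 2 - t0) < r) by (rewrite Rabs_pos_eq; lra).
          pose proof (Ha _ Hpt) as Hser. replace (t0 + r / 2 - t0) with (r / 2) in Hser by ring.
          exact Hser. }
        apply ex_series_lim_0 in Hser.
        eapply is_lim_seq_ext; [|exact Hser]. intros n. simpl.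
        rewrite pow_n_pow. unfold scal; simpl. unfold mult; simpl. ring.
    - eapply Rbar_lt_le_trans; [|exact Hle]. simpl. lra. }
  apply continuous_ext_loc with (g := fun t => PSeries a (t - t0)).
  - exists (mkposreal r Hr). intros t Ht. apply is_pseries_unique, Ha, Ht.
  - apply (continuous_comp (fun t => t - t0) (PSeries a) t0).
    + apply (ex_derive_continuous (V := R_NormedModule)). auto_derive. exact I.
    + rewrite Rminus_diag. apply (ex_derive_continuous (V := R_NormedModule)).
      apply ex_derive_PSeries. rewrite Rabs_R0. exact Hrad.
Qed.

Lemma abel_solution_congr (f g f' g' x : R -> R) :
  (forall t, -1 <= t <= 1 -> f' t = f t /\ g' t = g t) ->
  abel_solution f g x -> abel_solution f' g' x.
Proof.
  intros Hfg Hx t Ht. destruct (Hfg t Ht) as [-> ->]. apply Hx, Ht.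
Qed.

Lemma abel_center_congr (f g f' g' : R -> R) :
  (forall t, -1 <= t <= 1 -> f' t = f t /\ g' t = g t) ->
  abel_center f g -> abel_center f' g'.
Proof.
  intros Hfg [delta [Hdelta Hcenter]]. exists delta. split; [exact Hdelta|].
  intros x0 Hx0. destruct (Hcenter x0 Hx0) as [[x [Hx Hx1]] Hret]. split.
  - exists x. split; [|exact Hx1]. exact (abel_solution_congr f g f' g' x Hfg Hx).
  - intros y Hy. apply Hret. apply (abel_solution_congr f' g' f g y); [|exact Hy].
    intros t Ht. destruct (Hfg t Ht) as [-> ->]. auto.
Qed.

Lemma abel_solution_continuous (f g x : R -> R) : abel_solution f g x ->
  forall t, -1 <= t <= 1 -> continuous x t.
Proof.
  intros Hx t Ht. apply (ex_derive_continuous (V := R_NormedModule)).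
  eexists. apply Hx, Ht.
Qed.

Lemma abel_integrand_continuous (f g x : R -> R) :
  everywhere_continuous f -> everywhere_continuous g -> abel_solution f g x ->
  forall t, -1 <= t <= 1 -> continuous (fun s => f s * x s + g s) t.
Proof.
  intros Hf Hg Hx t Ht.
  apply (continuous_plus (V := R_NormedModule)); [|apply Hg].
  apply (continuous_mult (K := R_AbsRing)); [apply Hf|].
  exact (abel_solution_continuous f g x Hx t Ht).
Qed.

Lemma abel_solution_inv_integral (f g x : R -> R) (t : R) :
  everywhere_continuous f -> everywhere_continuous g -> abel_solution f g x ->
  -1 <= t <= 1 -> (forall s, -1 <= s <= t -> x s <> 0) ->
  / x t = / x (-1) - RInt (fun s => f s * x s + g s) (-1) t.
Proof.
  intros Hf Hg Hx Ht Hnz.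
  assert (Hcont : forall s, Rmin (-1) t <= s <= Rmax (-1) t ->
                    continuous (fun s => f s * x s + g s) s).
  { intros s Hs. rewrite Rmin_left, Rmax_right in Hs by lra.
    apply (abel_integrand_continuous f g x Hf Hg Hx). lra. }
  assert (Hint : is_RInt (fun s => - (f s * x s + g s)) (-1) t (minus (/ x t) (/ x (-1)))).
  { apply (is_RInt_derive (V := R_CompleteNormedModule) (fun s => / x s)).
    - intros s Hs. pose proof Hs as Hs'. rewrite Rmin_left, Rmax_right in Hs' by lra.
      replace (- (f s * x s + g s))
        with (- (f s * x s ^ 3 + g s * x s ^ 2) / x s ^ 2) by (field; apply Hnz; lra).
      apply is_derive_inv; [apply Hx; lra | apply Hnz; lra].
    - intros s Hs. apply (continuous_opp (V := R_NormedModule)), Hcont, Hs. }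
  apply (is_RInt_unique (V := R_CompleteNormedModule)) in Hint.
  rewrite (RInt_opp (V := R_CompleteNormedModule)) in Hint
    by exact (ex_RInt_continuous (V := R_CompleteNormedModule) _ _ _ Hcont).
  unfold minus, plus, opp in Hint; simpl in Hint. lra.
Qed.

Section APrioriBand.

Variables (f g x : R -> R) (M c : R).
Hypotheses (Hf : everywhere_continuous f) (Hg : everywhere_continuous g)
  (HM : 1 <= M) (Hfg : forall t, -1 <= t <= 1 -> Rabs (f t) <= M /\ Rabs (g t) <= M)
  (Hc : 16 * M <= c) (Hx : abel_solution f g x) (Hx0 : x (-1) = / c).

Lemma abel_inverse_drift (t : R) : -1 <= t <= 1 ->
  (forall s, -1 <= s <= t -> 0 < c * x s < 2) -> Rabs (/ x t - c) <= 4 * M.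
Proof.
  intros Ht Hband.
  rewrite (abel_solution_inv_integral f g x t Hf Hg Hx Ht)
    by (intros s Hs; specialize (Hband s Hs); intros Hzero; rewrite Hzero in Hband; lra).
  rewrite Hx0, Rinv_inv.
  replace (c - RInt (fun s => f s * x s + g s) (-1) t - c)
    with (- RInt (fun s => f s * x s + g s) (-1) t) by ring.
  rewrite Rabs_Ropp.
  apply Rle_trans with ((t - -1) * (2 * M)); [|nra].
  apply abs_RInt_le_const; [lra| |].
  - apply (ex_RInt_continuous (V := R_CompleteNormedModule)).
    intros s Hs. rewrite Rmin_left, Rmax_right in Hs by lra.
    apply (abel_integrand_continuous f g x Hf Hg Hx). lra.
  - intros s Hs. destruct (Hfg s) as [Hfs Hgs]; [lra|].
    assert (Hxs : Rabs (x s) <= 1).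
    { specialize (Hband s Hs). rewrite Rabs_pos_eq; nra. }
    eapply Rle_trans; [apply Rabs_triang|].
    pose proof (Rabs_mult_le _ _ _ _ Hfs Hxs). lra.
Qed.

(* Continuous induction on the open condition [0 < c x < 2]: while it holds,
   the drift bound pins [c x] inside the closed band [4/5, 4/3]. *)
Lemma abel_inverse_band : forall t, -1 <= t <= 1 ->
  0 < x t /\ Rabs (/ x t - c) <= 4 * M.
Proof.
  assert (Hcband : forall s, -1 <= s <= 1 -> 0 < x s -> Rabs (/ x s - c) <= 4 * M ->
                     4 / 5 <= c * x s <= 4 / 3).
  { intros s Hs Hxs Hdrift. apply Rabs_le_between' in Hdrift.
    assert (Hinv : / x s * x s = 1) by (field; lra).
    split; nra. }
  assert (Hopen : forall t, -1 <= t <= 1 -> 0 < c * x t < 2).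
  { apply continuous_induction; [lra|]. intros t Ht Hbefore.
    assert (Hcx : continuous (fun s => c * x s) t).
    { apply (continuous_scal_r (K := R_AbsRing) (V := R_NormedModule) c x).
      exact (abel_solution_continuous f g x Hx t Ht). }
    assert (Hclosed : 4 / 5 <= c * x t <= 4 / 3).
    { destruct (Req_dec t (-1)) as [->|Ht1].
      - rewrite Hx0, Rinv_r by lra. lra.
      - assert (Hleft : forall s, -1 <= s < t -> 4 / 5 <= c * x s <= 4 / 3).
        { intros s Hs. apply Hcband; [lra| |].
          - specialize (Hbefore s Hs). nra.
          - apply abel_inverse_drift; [lra|]. intros u Hu. apply Hbefore. lra. }
        split.
        + assert (- (c * x t) <= - (4 / 5)); [|lra].
          apply (continuous_le_left (fun s => - (c * x s)) (-1)); [|lra|].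
          * apply (continuous_opp (V := R_NormedModule)), Hcx.
          * intros s Hs. specialize (Hleft s Hs). lra.
        + apply (continuous_le_left (fun s => c * x s) (-1)); [exact Hcx|lra|].
          intros s Hs. apply Hleft, Hs. }
    destruct (continuous_strict_bounds_near (fun s => c * x s) t 0 2 Hcx)
      as [d [Hd Hnear]]; [lra|].
    exists d. split; [exact Hd|]. intros s Hs.
    destruct (Rlt_or_le s t) as [Hst|Hts]; [apply Hbefore; lra|].
    apply Hnear. rewrite Rabs_pos_eq; lra. }
  intros t Ht. assert (Hdrift : Rabs (/ x t - c) <= 4 * M).
  { apply abel_inverse_drift; [exact Ht|]. intros s Hs. apply Hopen. lra. }
  split; [|exact Hdrift]. specialize (Hopen t Ht). nra.
Qed.

End APrioriBand.

(* [X] stands for the solution [x] of the Abel equation with [x(-1) = 1/c]: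
   integrating [(1/x)' = -(f x + g)] gives [1/x = c - G - primitive (f x)]. *)
Record inverse_solution (f G X : R -> R) (c M : R) : Prop := {
  inverse_solution_continuous : everywhere_continuous X;
  inverse_solution_eq : forall t, -1 <= t <= 1 ->
    X t * (c - (G t + primitive (fun s => f s * X s) t)) = 1;
  inverse_solution_band : forall t, -1 <= t <= 1 ->
    Rabs (G t + primitive (fun s => f s * X s) t) <= 4 * M;
  inverse_solution_return : G 1 + primitive (fun s => f s * X s) 1 = 0 }.

Lemma moment_le_of_expansion (f G P Rm : R -> R) (k : nat) (c K : R) :
  0 < c -> everywhere_continuous P -> everywhere_continuous Rm ->
  (RInt P (-1) 1 = 0 :> R) ->
  (forall t, -1 <= t <= 1 -> f t * G t ^ k = P t - / c * Rm t) ->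
  (forall t, -1 <= t <= 1 -> Rabs (Rm t) <= K) ->
  Rabs (moment f G k) <= 2 * K / c.
Proof.
  intros Hc HP HR HP0 Hexp HK. unfold moment.
  rewrite (RInt_ext_I _ _ Hexp), RInt_minus_R, RInt_scal_R, HP0, Rminus_0_l, Rabs_Ropp
    by auto with continuity.
  rewrite Rabs_mult, Rabs_inv, Rabs_pos_eq by lra.
  apply Rle_trans with (/ c * ((1 - -1) * K)).
  - apply Rmult_le_compat_l; [left; apply Rinv_0_lt_compat, Hc|].
    apply abs_RInt_le_const; auto with continuity; lra.
  - right. unfold Rdiv. ring.
Qed.

Section Moments.

Variables (f G X : R -> R) (c M : R).
Hypotheses (Hf : everywhere_continuous f) (HG : everywhere_continuous G)
  (HM : 1 <= M) (Hc : 16 * M <= c) (Hfb : forall t, -1 <= t <= 1 -> Rabs (f t) <= M)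
  (Hsol : inverse_solution f G X c M).

Local Notation E := (primitive (fun s => f s * X s)).

Let HX : everywhere_continuous X := inverse_solution_continuous f G X c M Hsol.
Let Heq := inverse_solution_eq f G X c M Hsol.
Let Hband := inverse_solution_band f G X c M Hsol.
Let Hret := inverse_solution_return f G X c M Hsol.
#[local] Hint Resolve HX : continuity.

Lemma inverse_ge_half (t : R) : -1 <= t <= 1 -> c / 2 <= c - (G t + E t).
Proof. intros Ht. pose proof (Hband t Ht) as HA. apply Rabs_le_between in HA. lra. Qed.

Lemma X_eq_inv (t : R) : -1 <= t <= 1 -> X t = / (c - (G t + E t)).
Proof.
  intros Ht. pose proof (inverse_ge_half t Ht).
  apply (Rmult_eq_reg_r (c - (G t + E t))); [|lra].
  rewrite Heq, Rinv_l by (auto || lra). reflexivity.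
Qed.

Lemma cX_bounds (t : R) : -1 <= t <= 1 -> 0 < c * X t <= 2.
Proof.
  intros Ht. pose proof (inverse_ge_half t Ht).
  rewrite X_eq_inv by exact Ht. split.
  - apply Rmult_lt_0_compat; [lra|]. apply Rinv_0_lt_compat. lra.
  - apply Rle_trans with (c * / (c / 2)).
    + apply Rmult_le_compat_l; [lra|]. apply Rinv_le_contravar; lra.
    + right. field. lra.
Qed.

Lemma cX_abs_bound (t : R) : -1 <= t <= 1 -> Rabs (c * X t) <= 2.
Proof. intros Ht. pose proof (cX_bounds t Ht). rewrite Rabs_pos_eq; lra. Qed.

Lemma cE_bound (t : R) : -1 <= t <= 1 -> Rabs (c * E t) <= 4 * M.
Proof.
  intros Ht. unfold primitive. rewrite <- RInt_scal_R by auto with continuity.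
  apply Rle_trans with ((t - -1) * (M * 2)); [|nra].
  apply abs_RInt_le_const; [lra | auto with continuity |].
  intros s Hs. replace (c * (f s * X s)) with (f s * (c * X s)) by ring.
  apply Rabs_mult_le; [apply Hfb | apply cX_abs_bound]; lra.
Qed.

Lemma E_bound (t : R) : -1 <= t <= 1 -> Rabs (E t) <= 1.
Proof.
  intros Ht. pose proof (cE_bound t Ht) as HcE.
  rewrite Rabs_mult, (Rabs_pos_eq c) in HcE by lra. nra.
Qed.

Lemma G_bound (t : R) : -1 <= t <= 1 -> Rabs (G t) <= 5 * M.
Proof.
  intros Ht. replace (G t) with ((G t + E t) - E t) by ring.
  pose proof (Rabs_minus_le _ _ _ _ (Hband t Ht) (E_bound t Ht)). lra.
Qed.

Lemma G_end_bound : Rabs (G 1) <= 4 * M / c.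
Proof.
  pose proof (cE_bound 1 ltac:(lra)) as HcE.
  replace (G 1) with (- E 1) by lra. rewrite Rabs_Ropp.
  apply (Rmult_le_reg_l c); [lra|].
  replace (c * (4 * M / c)) with (4 * M) by (field; lra).
  rewrite <- (Rabs_pos_eq c), <- Rabs_mult by lra. exact HcE.
Qed.

Local Ltac bound_leaf t Ht :=
  first [ apply (Hfb t Ht) | apply (Hband t Ht) | apply (cE_bound t Ht)
        | apply (E_bound t Ht) | apply (G_bound t Ht)
        | apply (cX_abs_bound t Ht) ].

Local Ltac bound_product t Ht :=
  first [ bound_leaf t Ht
        | apply Rabs_mult_le; bound_product t Ht
        | apply Rabs_plus_le; bound_product t Ht
        | apply Rabs_minus_le; bound_product t Ht ].

Local Ltac expansion_identity t Ht :=
  rewrite X_eq_inv by exact Ht; field;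
  pose proof (inverse_ge_half t Ht); split; lra.

Hypothesis HG1 : G 1 = 0.

Lemma E_end : E 1 = 0.
Proof. lra. Qed.

Lemma moment0_bound : Rabs (moment f G 0) <= 16 * M ^ 2 / c.
Proof.
  replace (16 * M ^ 2 / c) with (2 * (8 * M ^ 2) / c) by (unfold Rdiv; ring).
  apply (moment_le_of_expansion f G (fun t => c * (f t * X t))
           (fun t => f t * (G t + E t) * (c * X t))); [lra | auto 10 with continuity .. | | |].
  - rewrite RInt_scal_R by auto with continuity.
    fold (E 1). rewrite E_end. ring.
  - intros t Ht. expansion_identity t Ht.
  - intros t Ht. eapply Rle_trans.
    + bound_product t Ht.
    + nra.
Qed.

Hypothesis Hm0 : moment f G 0 = 0.

Lemma moment1_bound : Rabs (moment f G 1) <= 72 * M ^ 3 / c.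
Proof.
  replace (72 * M ^ 3 / c) with (2 * (36 * M ^ 3) / c) by (unfold Rdiv; ring).
  apply (moment_le_of_expansion f G
           (fun t => c ^ 2 * (f t * X t) - c * (f t * G t ^ 0))
           (fun t => f t * (c * E t) + f t * (G t + E t) * (G t + E t) * (c * X t)));
    [lra | auto 10 with continuity .. | | |].
  - rewrite RInt_minus_R, !RInt_scal_R by auto 10 with continuity.
    fold (E 1) (moment f G 0). rewrite E_end, Hm0. ring.
  - intros t Ht. expansion_identity t Ht.
  - intros t Ht. eapply Rle_trans.
    + bound_product t Ht.
    + nra.
Qed.

Hypothesis Hm1 : moment f G 1 = 0.

(* The term [c f E] of the expansion is not [O(1/c)]; writing [f = f X (c - G - E)]
   turns it into [c^2 E (f X)], whose integral [E(1)^2 / 2] vanishes, plus [O(1/c)]. *)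
Lemma moment2_bound : Rabs (moment f G 2) <= 392 * M ^ 4 / c.
Proof.
  replace (392 * M ^ 4 / c) with (2 * (196 * M ^ 4) / c) by (unfold Rdiv; ring).
  apply (moment_le_of_expansion f G
           (fun t => c ^ 3 * (f t * X t) - c ^ 2 * (f t * G t ^ 0) - c * (f t * G t ^ 1)
                     - c ^ 2 * (E t * (f t * X t)))
           (fun t => f t * ((G t + (G t + E t)) * (c * E t)
                            + (G t + E t) * (G t + E t) * (G t + E t) * (c * X t)
                            - (G t + E t) * (c * E t) * (c * X t))));
    [lra | auto 10 with continuity .. | | |].
  - rewrite !RInt_minus_R, !RInt_scal_R by auto 10 with continuity.
    rewrite RInt_primitive_mul_self by auto with continuity.
    fold (E 1) (moment f G 0) (moment f G 1). rewrite E_end, Hm0, Hm1. unfold Rdiv. ring.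
  - intros t Ht. expansion_identity t Ht.
  - intros t Ht. eapply Rle_trans.
    + bound_product t Ht.
    + nra.
Qed.

End Moments.

Lemma abel_center_inverse_solutions (f g : R -> R) (M : R) :
  everywhere_continuous f -> everywhere_continuous g -> 1 <= M ->
  (forall t, -1 <= t <= 1 -> Rabs (f t) <= M /\ Rabs (g t) <= M) ->
  abel_center f g ->
  exists c0, 16 * M <= c0 /\
    forall c, c0 <= c -> exists X, inverse_solution f (primitive g) X c M.
Proof.
  intros Hf Hg HM Hfg [delta [Hdelta Hcenter]].
  exists (Rmax (16 * M) (2 / delta)). split; [apply Rmax_l|]. intros c Hc.
  pose proof (Rmax_l (16 * M) (2 / delta)). pose proof (Rmax_r (16 * M) (2 / delta)).
  assert (Hc16 : 16 * M <= c) by lra.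
  assert (Hsmall : Rabs (/ c) < delta).
  { rewrite Rabs_pos_eq by (left; apply Rinv_0_lt_compat; lra).
    apply Rle_lt_trans with (/ (2 / delta)).
    - apply Rinv_le_contravar; [|lra]. unfold Rdiv. apply Rmult_lt_0_compat; [lra|].
      apply Rinv_0_lt_compat, Hdelta.
    - replace (/ (2 / delta)) with (delta / 2) by (field; lra). lra. }
  destruct (Hcenter (/ c) Hsmall) as [[x [Hx Hx0]] Hret].
  pose proof (Hret x Hx Hx0) as Hx1.
  pose proof (abel_inverse_band f g x M c Hf Hg HM Hfg Hc16 Hx Hx0) as Hband.
  assert (HX : everywhere_continuous (extend x))
    by exact (extend_everywhere_continuous x (abel_solution_continuous f g x Hx)).
  assert (Hinv : forall t, -1 <= t <= 1 ->
            primitive g t + primitive (fun s => f s * extend x s) t = c - / x t).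
  { intros t Ht.
    rewrite (abel_solution_inv_integral f g x t Hf Hg Hx Ht), Hx0, Rinv_inv.
    2: { intros s Hs. apply Rgt_not_eq, Hband. lra. }
    fold (primitive (fun s => f s * x s + g s) t).
    rewrite (primitive_congr (fun s => f s * x s + g s) (fun s => f s * extend x s + g s))
      by (lra || (intros s Hs; rewrite extend_id by lra; reflexivity)).
    unfold primitive. rewrite RInt_plus_R by auto with continuity. ring. }
  exists (extend x). split.
  - exact HX.
  - intros t Ht. rewrite Hinv, extend_id by exact Ht.
    replace (c - (c - / x t)) with (/ x t) by ring.
    apply Rinv_r, Rgt_not_eq, Hband, Ht.
  - intros t Ht. rewrite Hinv, Rabs_minus_sym by exact Ht. apply Hband, Ht.
  - rewrite Hinv, Hx1, Rinv_inv by lra. ring.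
Qed.

Lemma eq_0_of_Rabs_le_div (m K c0 : R) : 0 < c0 ->
  (forall c, c0 <= c -> Rabs m <= K / c) -> m = 0.
Proof.
  intros Hc0 Hsmall. apply Rabs_eq_0, Rle_antisym; [|apply Rabs_pos].
  apply Rnot_lt_le. intros Hm.
  set (c := c0 + Rabs K / Rabs m).
  assert (HKm : 0 <= Rabs K / Rabs m)
    by (unfold Rdiv; apply Rmult_le_pos; [apply Rabs_pos | left; apply Rinv_0_lt_compat, Hm]).
  pose proof (Hsmall c ltac:(unfold c; lra)) as Hle.
  apply (Rmult_le_compat_r c) in Hle; [|unfold c; lra].
  replace (K / c * c) with K in Hle by (field; unfold c; lra).
  assert (Hmc : Rabs m * c = Rabs m * c0 + Rabs K) by (unfold c; field; lra).
  pose proof (Rle_abs K). nra.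
Qed.

Lemma everywhere_continuous_bounded_on_I (h : R -> R) : everywhere_continuous h ->
  exists B, forall t, -1 <= t <= 1 -> Rabs (h t) <= B.
Proof.
  intros Hh.
  destruct (continuity_ab_maj (fun t => Rabs (h t)) (-1) 1) as [tmax [Htmax _]]; [lra | |].
  - intros t _. apply continuity_pt_filterlim, continuous_Rabs_comp, Hh.
  - exists (Rabs (h tmax)). exact Htmax.
Qed.

Lemma abel_center_moments_vanish (f g : R -> R) :
  everywhere_continuous f -> everywhere_continuous g -> abel_center f g ->
  forall k, (k <= 2)%nat -> moment f (primitive g) k = 0.
Proof.
  intros Hf Hg Hcenter.
  destruct (everywhere_continuous_bounded_on_I f Hf) as [Bf HBf].
  destruct (everywhere_continuous_bounded_on_I g Hg) as [Bg HBg].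
  set (M := Rmax 1 (Rmax Bf Bg)).
  assert (HM : 1 <= M) by apply Rmax_l.
  assert (Hfg : forall t, -1 <= t <= 1 -> Rabs (f t) <= M /\ Rabs (g t) <= M).
  { intros t Ht. pose proof (HBf t Ht). pose proof (HBg t Ht).
    pose proof (Rmax_r 1 (Rmax Bf Bg)). pose proof (Rmax_l Bf Bg). pose proof (Rmax_r Bf Bg).
    unfold M. split; lra. }
  assert (Hfb : forall t, -1 <= t <= 1 -> Rabs (f t) <= M) by apply Hfg.
  destruct (abel_center_inverse_solutions f g M Hf Hg HM Hfg Hcenter) as [c0 [Hc0 Hsol]].
  assert (HG : everywhere_continuous (primitive g)) by auto with continuity.
  assert (Hvanish : forall m K,
            (forall c X, 16 * M <= c -> inverse_solution f (primitive g) X c M ->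
               Rabs m <= K / c) -> m = 0).
  { intros m K Hbound. apply (eq_0_of_Rabs_le_div m K c0); [lra|].
    intros c Hc. destruct (Hsol c Hc) as [X HX]. apply (Hbound c X); [lra | exact HX]. }
  assert (HG1 : primitive g 1 = 0)
    by (apply (Hvanish _ (4 * M)); intros c X Hc HX; exact (G_end_bound f _ X c M Hf HM Hc Hfb HX)).
  assert (Hm0 : moment f (primitive g) 0 = 0).
  { apply (Hvanish _ (16 * M ^ 2)). intros c X Hc HX.
    exact (moment0_bound f _ X c M Hf HG HM Hc Hfb HX HG1). }
  assert (Hm1 : moment f (primitive g) 1 = 0).
  { apply (Hvanish _ (72 * M ^ 3)). intros c X Hc HX.
    exact (moment1_bound f _ X c M Hf HG HM Hc Hfb HX HG1 Hm0). }
  assert (Hm2 : moment f (primitive g) 2 = 0).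
  { apply (Hvanish _ (392 * M ^ 4)). intros c X Hc HX.
    exact (moment2_bound f _ X c M Hf HG HM Hc Hfb HX HG1 Hm0 Hm1). }
  intros k Hk. destruct k as [|[|[|k]]]; auto. lia.
Qed.

Lemma moment_extend (f g : R -> R) (k : nat) :
  moment f (primitive g) k = moment (extend f) (primitive (extend g)) k.
Proof.
  apply RInt_ext_I. intros t Ht. rewrite extend_id by exact Ht.
  rewrite (primitive_congr (extend g) g) by (lra || (intros s Hs; apply extend_id; lra)).
  reflexivity.
Qed.

Theorem theorem1 (f g : R -> R) :
  real_analytic_on_I f -> real_analytic_on_I g ->
  abel_center f g ->
  forall k : nat, (k <= 2)%nat ->
    RInt (fun t => f t * (RInt g (-1) t) ^ k) (-1) 1 = 0.
Proof.
  intros Hf Hg Hcenter k Hk.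
  change (moment f (primitive g) k = 0). rewrite moment_extend.
  apply abel_center_moments_vanish; [| | | exact Hk].
  - apply extend_everywhere_continuous, real_analytic_on_I_continuous, Hf.
  - apply extend_everywhere_continuous, real_analytic_on_I_continuous, Hg.
  - apply (abel_center_congr f g); [|exact Hcenter].
    intros t Ht. rewrite !extend_id by exact Ht. auto.
Qed.
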